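(* Let $q\ge 8$ be a power of two and $\Omega=\{0,1,\ldots,q-1\}$. Let $\sigma_1$ be the identity permutation, $\sigma_1(i)=i$, and let $\sigma_2(i) = (5i+2) \bmod q$ for $0\le i<q$. Then $\sigma_2$ is a permutation of $\Omega$ and $(\sigma_1,\sigma_2)$ is a nice pair of permutations.
   Context: For a permutation $\sigma$ of a $q$-element set $\Omega$ and $0 \le i < q$, $\sigma(i)$ denotes the element in position $i$. Given two permutations $\sigma_1,\sigma_2$ of $\Omega$, form the $2\times q$ array whose first row is $\sigma_1(0),\ldots,\sigma_1(q-1)$ and whose second row is $\sigma_2(0),\ldots,\sigma_2(q-1)$. Each $a\in\Omega$ occurs once in each row. If $a=\sigma_1(i)$, its first-row neighbors are $l_1=\sigma_1(i-1 \bmod q)$, $r_1=\sigma_1(i+1 \bmod q)$ and the down-neighbor $d=\sigma_2(i)$. If $a=\sigma_2(j)$, its second-row neighbors are $l_2=\sigma_2(j-1\bmod q)$, $r_2=\sigma_2(j+1 \bmod q)$ and the up-neighbor $u=\sigma_1(j)$. The pair $(\sigma_1,\sigma_2)$ is called a nice pair if for every $a\in\Omega$ the six elements $l_1,r_1,d,l_2,r_2,u$ are pairwise distinct. *)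

From mathcomp Require Import all_boot.
Set Implicit Arguments. Unset Strict Implicit. Unset Printing Implicit Defensive.

(* Omega = {0,...,q-1} is modelled by 'I_q; positions 0 <= i < q are also 'I_q.
   ordS / ord_pred are the cyclic successor / predecessor (i+1 mod q, i-1 mod q). *)

(* (s1, s2) is a nice pair: both are permutations of Omega, and for every a,
   with a = s1 i and a = s2 j, the six elements l1 r1 d l2 r2 u are pairwise distinct. *)
Definition nice_pair (q : nat) (s1 s2 : 'I_q -> 'I_q) : Prop :=
  [/\ bijective s1, bijective s2 &
   forall (a : 'I_q) (i j : 'I_q), s1 i = a -> s2 j = a ->
     uniq [:: s1 (ord_pred i); s1 (ordS i); s2 i;
              s2 (ord_pred j); s2 (ordS j); s1 j]].

Definition sigma1 (q : nat) : 'I_q -> 'I_q := fun i => i.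

(* sigma_2(i) = (5 i + 2) mod q; q > 0 follows from the existence of i. *)
Definition sigma2 (q : nat) : 'I_q -> 'I_q := fun i =>
  Ordinal (ltn_pmod (5 * i + 2) (leq_ltn_trans (leq0n i) (ltn_ord i))).

(* Bijectivity only needs gcd(q, 5) = 1: multiplication by 5 can be cancelled
   modulo q, so sigma_2 is injective on the finite type 'I_q.

   Niceness is decided modulo 8, which divides q.  If a = i = sigma_2(j) and
   r = j mod 8, the six neighbours of a reduce modulo 8 to
     l1 = 5r+1, r1 = 5r+3, d = 25r+12 = r+4, l2 = 5r+5, r2 = 5r+7, u = r,
   because reduction modulo q, the cyclic successor/predecessor and sigma_2 are
   all compatible with reduction modulo any divisor of q.  These six residues
   are pairwise distinct for every r < 8 (the first, second, fourth and fifth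
   differ by even nonzero amounts, the third and sixth by 4, and the two groups
   have opposite parities), so the six neighbours themselves are distinct. *)
From mathcomp Require Import all_boot.
From mathcomp Require Import zify.

Set Implicit Arguments.
Unset Strict Implicit.
Unset Printing Implicit Defensive.

Lemma eqn_mod_mul2l (q c x y : nat) : coprime q c ->
  (c * x == c * y %[mod q]) = (x == y %[mod q]).
Proof.
move=> cop_qc; wlog le_yx : x y / y <= x.
  move=> sym; case: (leqP y x) => [|/ltnW le_xy]; first exact: sym.
  by rewrite eq_sym [in RHS]eq_sym sym.
by rewrite !eqn_mod_dvd ?leq_mul2l ?le_yx ?orbT // -mulnBr Gauss_dvdr.
Qed.

Lemma sigma2_bij (q : nat) : coprime q 5 -> bijective (@sigma2 q).
Proof.
move=> cop_q5; apply: injF_bij => x y /(congr1 val) /= /eqP.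
rewrite eqn_modDr eqn_mod_mul2l // !modn_small // => /eqP.
exact: val_inj.
Qed.

Lemma dvd8_pow2 (k : nat) : 8 <= 2 ^ k -> 8 %| 2 ^ k.
Proof.
move=> ge8; rewrite (@dvdn_exp2l 2 3) //.
by rewrite -(@leq_exp2l 2) //; apply: leq_trans ge8 _.
Qed.

Section ResiduesModDivisor.

Variables (q d : nat).
Hypotheses (d_gt0 : 0 < d) (d_dvd_q : d %| q).

Lemma ordS_mod (i : 'I_q) : ordS i %% d = i.+1 %% d.
Proof. by rewrite /= modn_dvdm. Qed.

Lemma ord_pred_mod (i : 'I_q) : ord_pred i %% d = (i + d.-1) %% d.
Proof.
have q_gt0 : 0 < q by apply: leq_ltn_trans (ltn_ord i).
have [[|m] def_q] := dvdnP d_dvd_q; first by rewrite def_q in q_gt0.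
rewrite /= modn_dvdm //.
have -> : (i + q).-1 = m * d + (i + d.-1).
  by move: (nat_of_ord i) => n; rewrite def_q mulSnr; lia.
by rewrite modnMDl.
Qed.

Lemma sigma2_mod (x : 'I_q) : sigma2 x %% d = (5 * x + 2) %% d.
Proof. by rewrite /= modn_dvdm. Qed.

End ResiduesModDivisor.

Lemma neighbour_residues_uniq (r : nat) : r < 8 ->
  uniq [:: (5 * r + 1) %% 8; (5 * r + 3) %% 8; (r + 4) %% 8;
           (5 * r + 5) %% 8; (5 * r + 7) %% 8; r].
Proof. by case: r => [|[|[|[|[|[|[|[|]]]]]]]]. Qed.

Theorem mainTheorem3 (q k : nat) (hq : q = 2 ^ k) (h8 : 8 <= q) :
  bijective (@sigma2 q) /\ nice_pair (@sigma1 q) (@sigma2 q).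
Proof.
have bij2 : bijective (@sigma2 q) by apply: sigma2_bij; rewrite hq coprimeXl.
have d8 : 8 %| q by rewrite hq dvd8_pow2 // -hq.
split => //; split => //; first by exists id.
move=> _ i j <-; rewrite /sigma1 => <-.
apply: (@map_uniq _ _ (fun x : 'I_q => x %% 8)); rewrite !map_cons.
rewrite (ord_pred_mod (ltn0Sn 7) d8) (ordS_mod d8) !(sigma2_mod d8).
have := sigma2_mod d8 j; have := ord_pred_mod (ltn0Sn 7) d8 j.
have := ordS_mod d8 j.
move: (nat_of_ord (sigma2 j)) (nat_of_ord (ord_pred j)) (nat_of_ord (ordS j)).
move=> s p n n_j p_j s_j.
have -> : (s + 7) %% 8 = (5 * (j %% 8) + 1) %% 8 by lia.
have -> : s.+1 %% 8 = (5 * (j %% 8) + 3) %% 8 by lia.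
have -> : (5 * s + 2) %% 8 = (j %% 8 + 4) %% 8 by lia.
have -> : (5 * p + 2) %% 8 = (5 * (j %% 8) + 5) %% 8 by lia.
have -> : (5 * n + 2) %% 8 = (5 * (j %% 8) + 7) %% 8 by lia.
by apply: neighbour_residues_uniq; rewrite ltn_mod.
Qed.
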